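(* Let $(W,\omega^W)$ be a vertex operator algebra. The map $\pi:\operatorname{ScAlg}(W,\omega^W)\to\operatorname{Sc}(W,\omega^W)$, $(V,\omega^V)\mapsto\omega^V$, restricts to a bijection from $\overline{\operatorname{S}(W,\omega^W)}$ onto $\operatorname{Sc}(W,\omega^W)$, whose inverse is $\omega'\mapsto (C_W(C_W(\langle\omega'\rangle)),\omega')$.
   Context: For a vertex operator algebra $(W,\omega^W)$ with $Y(v,z)=\sum_n v_nz^{-n-1}$ and $Y(\omega^W,z)=\sum_n L^W(n)z^{-n-2}$: a vertex operator subalgebra $(V,\omega^V)$ (a vertex subalgebra $V\ni\mathbf 1$ with a vector $\omega^V\in V$ making it a vertex operator algebra, possibly with a different conformal vector) is semi-conformal if $L^W(n)|_V=L^V(n)|_V$ for all $n\ge0$; $\omega^V$ is then called a semi-conformal vector. $\operatorname{ScAlg}(W,\omega^W)$ is the set of semi-conformal subalgebras, $\operatorname{Sc}(W,\omega^W)$ the set of semi-conformal vectors. For a vertex subalgebra $U$, the commutant is $C_W(U)=\{v\in W: u_nv=0\ \forall u\in U,\ n\ge 0\}$. $\langle\omega'\rangle$ denotes the vertex subalgebra generated by $\omega'$ and $\mathbf 1$. $\overline{\operatorname{S}(W,\omega^W)}=\{(V,\omega')\in\operatorname{ScAlg}(W,\omega^W): C_W(C_W(V))=V\}$ (the conformally closed semi-conformal subalgebras). *)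

(* Vertex operator algebras over a field K of characteristic 0,
   following Lepowsky--Li / Frenkel--Lepowsky--Meurman. *)
From HB Require Import structures.
From mathcomp Require Import all_boot all_order all_algebra.
Set Implicit Arguments. Unset Strict Implicit. Unset Printing Implicit Defensive.
Import Order.TTheory GRing.Theory Num.Theory.
Local Open Scope ring_scope.

Section VOA.
Variables (K : fieldType) (W : lmodType K).

(* A vertex operator map: [Y u n v] is the mode [u_n v], where
   Y(u,z) = sum_n u_n z^{-n-1}. *)
Definition vop := W -> int -> W -> W.

Definition binz (m : int) (i : nat) : K :=
  (\prod_(j < i) (m - (j%:Z))%:~R) / (i`!)%:R.

Definition subspace (V : W -> Prop) : Prop :=
  V 0 /\ forall (a : K) x y, V x -> V y -> V (a *: x + y).

Definition is_VOA (V : W -> Prop) (Y : vop) (vac om : W) : Prop :=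
  let L := fun (m : int) (v : W) => Y om (m + 1) v in
  subspace V /\ V vac /\ V om /\
  (forall u v n, V u -> V v -> V (Y u n v)) /\
  (forall (a : K) u u' v n, V u -> V u' -> V v ->
     Y (a *: u + u') n v = a *: Y u n v + Y u' n v) /\
  (forall (a : K) u v v' n, V u -> V v -> V v' ->
     Y u n (a *: v + v') = a *: Y u n v + Y u n v') /\
  (forall u v, V u -> V v -> exists N : int, forall n, N <= n -> Y u n v = 0) /\
  (forall v n, V v -> Y vac n v = (if n == -1 then v else 0)) /\
  (forall v, V v -> Y v (-1) vac = v) /\
  (forall v n, V v -> 0 <= n -> Y v n vac = 0) /\
  (* Jacobi identity, in Borcherds' component form; the sums are finite and
     taken over any range [0, M) outside of which all terms vanish *)
  (forall (u v w : W) (l m n : int) (M : nat), V u -> V v -> V w ->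
     (forall k : nat, (M <= k)%N ->
        [/\ Y u (l + k%:Z) v = 0, Y v (n + k%:Z) w = 0 & Y u (m + k%:Z) w = 0]) ->
     \sum_(i < M) binz m i *: Y (Y u (l + i%:Z) v) (m + n - i%:Z) w =
     \sum_(i < M) ((-1) ^+ i * binz l i) *:
        (Y u (l + m - i%:Z) (Y v (n + i%:Z) w)
         - (-1) ^+ `|l|%N *: Y v (l + n - i%:Z) (Y u (m + i%:Z) w))) /\
  (exists c : K, forall (m n : int) v, V v ->
     L m (L n v) - L n (L m v) =
     (m - n)%:~R *: L (m + n) v
     + (((m ^+ 3 - m)%:~R / 12%:R) * (if m + n == 0 then c else 0)) *: v) /\
  (* L(-1)-derivative property  Y(L(-1)u, z) = d/dz Y(u, z) *)
  (forall u w n, V u -> V w -> Y (L (-1) u) n w = - (n%:~R *: Y u (n - 1) w)) /\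
  (forall v, V v -> exists (s : seq int) (f : int -> W),
     (forall n, V (f n) /\ L 0 (f n) = n%:~R *: f n) /\ v = \sum_(n <- s) f n) /\
  (forall n : int, exists s : seq W, forall v, V v -> L 0 v = n%:~R *: v ->
     exists c : nat -> K, v = \sum_(i < size s) c i *: s`_i) /\
  (exists N : int, forall (n : int) v, n < N -> V v -> L 0 v = n%:~R *: v -> v = 0).

Definition setT_W : W -> Prop := fun _ => True.
Definition set_eq (A B : W -> Prop) : Prop := forall x, A x <-> B x.

Definition vertex_subalgebra (Y : vop) (vac : W) (V : W -> Prop) : Prop :=
  [/\ subspace V, V vac & forall u v n, V u -> V v -> V (Y u n v)].

Definition vgen (Y : vop) (vac x : W) : W -> Prop :=
  fun v => forall U, vertex_subalgebra Y vac U -> U x -> U v.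

Definition commutant (Y : vop) (U : W -> Prop) : W -> Prop :=
  fun v => forall u (n : int), U u -> 0 <= n -> Y u n v = 0.

Definition ScAlg (Y : vop) (vac om : W) (V : W -> Prop) (omV : W) : Prop :=
  is_VOA V Y vac omV /\
  forall (n : int) v, 0 <= n -> V v -> Y om (n + 1) v = Y omV (n + 1) v.

Definition Sc (Y : vop) (vac om : W) (omV : W) : Prop :=
  exists V, ScAlg Y vac om V omV.

Definition ScClosed (Y : vop) (vac om : W) (V : W -> Prop) (omV : W) : Prop :=
  ScAlg Y vac om V omV /\ set_eq (commutant Y (commutant Y V)) V.

End VOA.

(* Let (V, omV) be semi-conformal.  On V both omV_0 and om_0 equal L(-1) v = v_(-2) 1,
   and a vector x with x_0 v = L(-1) v that annihilates w forces v to annihilate w;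
   hence C_W(<omV>) = C_W(V), and a closed V equals C_W(C_W(<omV>)).  Conversely
   om - omV is annihilated by V, so it lies in C_W(V) = C_W(<omV>), and om and omV
   have the same nonnegative modes on D = C_W(C_W(<omV>)), a vertex subalgebra
   containing omV.  The Virasoro relations of V determine the products omV_i omV,
   and through the commutator formula of W they give the Virasoro relations of
   omV on all of W, making (D, omV) a closed semi-conformal subalgebra. *)

From mathcomp Require Import all_boot all_order all_algebra.
From mathcomp Require Import zify ring.
Set Implicit Arguments. Unset Strict Implicit. Unset Printing Implicit Defensive.
Import Order.TTheory GRing.Theory Num.Theory.
Local Open Scope ring_scope.

Lemma pchar0_intr_eq0 (K : fieldType) (z : int) :
  [pchar K] =i pred0 -> (z%:~R == 0 :> K) = (z == 0).
Proof.
move=> /pcharf0P natf0; case: z => [p|p]; first by rewrite -pmulrn natf0.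
by rewrite NegzE intrN oppr_eq0 -pmulrn natf0.
Qed.

Lemma subspaceZ (K : fieldType) (W : lmodType K) (D : W -> Prop) a x :
  subspace D -> D x -> D (a *: x).
Proof. by case=> D0 DZD Dx; rewrite -[a *: x]addr0; apply: DZD. Qed.

Lemma subspaceD (K : fieldType) (W : lmodType K) (D : W -> Prop) x y :
  subspace D -> D x -> D y -> D (x + y).
Proof. by case=> D0 DZD Dx Dy; rewrite -[x]scale1r; apply: DZD. Qed.

Section EigenDecomposition.
Variables (K : fieldType) (W : lmodType K) (T : W -> W).
Hypothesis charK0 : [pchar K] =i pred0.
Hypothesis T_linear : linear T.

Let TD x y : T (x + y) = T x + T y.
Proof. by have := T_linear 1 x y; rewrite !scale1r. Qed.

Let T0 : T 0 = 0.
Proof. by apply: (addrI (T 0)); rewrite -TD !addr0. Qed.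

Let TZ a x : T (a *: x) = a *: T x.
Proof. by have := T_linear a x 0; rewrite !addr0 T0 addr0. Qed.

(* [eigenproj s n] applies prod_(k in s, k != n) (T - k) / (n - k), the Lagrange
   interpolation polynomial that keeps the n-eigencomponent and kills the others. *)
Fixpoint eigenproj (s : seq int) (n : int) (x : W) : W :=
  if s is k :: s' then
    let y := eigenproj s' n x in
    if k == n then y else ((n - k)%:~R)^-1 *: (T y - k%:~R *: y)
  else x.

Lemma eigenprojD s n x y : eigenproj s n (x + y) = eigenproj s n x + eigenproj s n y.
Proof.
elim: s => [|k s IH] //=; case: eqP => // _.
by rewrite IH TD -scalerDr; congr (_ *: _); rewrite scalerDr opprD addrACA.
Qed.

Lemma eigenproj_sum s n (r : seq int) (F : int -> W) :
  eigenproj s n (\sum_(k <- r) F k) = \sum_(k <- r) eigenproj s n (F k).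
Proof.
have proj0 : eigenproj s n 0 = 0.
  by apply: (addrI (eigenproj s n 0)); rewrite -eigenprojD !addr0.
elim: r => [|k r IH]; first by rewrite !big_nil.
by rewrite !big_cons eigenprojD IH.
Qed.

Lemma eigenproj_eigen s n m x : T x = m%:~R *: x ->
  eigenproj s n x = (\prod_(k <- s | k != n) ((m - k)%:~R / (n - k)%:~R)) *: x.
Proof.
move=> Tx; elim: s => [|k s IH] /=; first by rewrite big_nil scale1r.
rewrite big_cons; case: (eqVneq k n) => [->|kn] //=.
rewrite IH TZ Tx !scalerA -scalerBl scalerA intrB; congr (_ *: _); ring.
Qed.

Lemma eigenproj_id s n x : T x = n%:~R *: x -> eigenproj s n x = x.
Proof.
move=> Tx; rewrite (eigenproj_eigen s n Tx) big1_seq ?scale1r // => k /andP [kn _].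
by apply: divff; rewrite pchar0_intr_eq0 // subr_eq0 eq_sym.
Qed.

Lemma eigenproj_other s n m x : m \in s -> m != n -> T x = m%:~R *: x ->
  eigenproj s n x = 0.
Proof.
move=> + mn Tx; rewrite (eigenproj_eigen s n Tx).
elim: s => //= k s IH; rewrite inE big_cons => /orP [/eqP <-|ms].
  by rewrite mn subrr mul0r mul0r scale0r.
by case: ifP => _; rewrite -?scalerA IH ?scaler0.
Qed.

Lemma eigenproj_stable (D : W -> Prop) s n x :
  subspace D -> (forall y, D y -> D (T y)) -> D x -> D (eigenproj s n x).
Proof.
move=> subD TD_D Dx; elim: s => //= k s IH; case: ifP => // _.
apply: subspaceZ => //; apply: subspaceD => //; first exact: TD_D.
by rewrite -scaleN1r; do 2 apply: subspaceZ => //.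
Qed.

Lemma eigen_decomposition (D : W -> Prop) v :
  subspace D -> (forall x, D x -> D (T x)) -> D v ->
  (exists (s : seq int) (g : int -> W),
     (forall n, T (g n) = n%:~R *: g n) /\ v = \sum_(n <- s) g n) ->
  exists (s : seq int) (f : int -> W),
    (forall n, D (f n) /\ T (f n) = n%:~R *: f n) /\ v = \sum_(n <- s) f n.
Proof.
move=> subD TD_D Dv [s [g [Tg ev]]].
have proj_g n : eigenproj s n v = \sum_(k <- s) (if k == n then g k else 0).
  rewrite ev eigenproj_sum; apply: eq_big_seq => k ks.
  case: (eqVneq k n) => [<-|kn]; first exact: eigenproj_id.
  exact: eigenproj_other ks kn (Tg k).
exists (undup s), (fun n => eigenproj s n v); split=> [n|].
  split; first exact: eigenproj_stable.
  rewrite proj_g; elim: (s) => [|k s' IH]; first by rewrite !big_nil T0 scaler0.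
  by rewrite !big_cons TD IH scalerDr; case: eqP => [->|_]; rewrite ?Tg ?T0 ?scaler0.
under [RHS]eq_bigr do rewrite proj_g.
rewrite {1}ev exchange_big /=; apply: eq_big_seq => k ks.
rewrite (big_rem k) ?mem_undup // eqxx big1_seq ?Monoid.mulm1 // => n /andP [_].
by case: eqP => // <-; rewrite mem_rem_uniqF ?undup_uniq.
Qed.
End EigenDecomposition.

Section VOAAxioms.
Variables (K : fieldType) (W : lmodType K) (V : W -> Prop) (Y : vop W) (vac om : W).
Hypothesis hV : is_VOA V Y vac om.

Lemma voa_subalgebra : vertex_subalgebra Y vac V.
Proof. by case: hV => ? [? [_ [? _]]]; split. Qed.

Lemma voa_conformal : V om.
Proof. by case: hV => _ [_ [? _]]. Qed.

Lemma voa_linearl a u u' v n : V u -> V u' -> V v ->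
  Y (a *: u + u') n v = a *: Y u n v + Y u' n v.
Proof. by case: hV => _ [_ [_ [_ [H _]]]]; apply: H. Qed.

Lemma voa_linearr a u v v' n : V u -> V v -> V v' ->
  Y u n (a *: v + v') = a *: Y u n v + Y u n v'.
Proof. by case: hV => _ [_ [_ [_ [_ [H _]]]]]; apply: H. Qed.

Lemma voa_truncation u v : V u -> V v -> exists N : int, forall n, N <= n -> Y u n v = 0.
Proof. by case: hV => _ [_ [_ [_ [_ [_ [H _]]]]]]; apply: H. Qed.

Lemma voa_vacuum v n : V v -> Y vac n v = (if n == -1 then v else 0).
Proof. by case: hV => _ [_ [_ [_ [_ [_ [_ [H _]]]]]]]; apply: H. Qed.

Lemma voa_creation v : V v -> Y v (-1) vac = v.
Proof. by case: hV => _ [_ [_ [_ [_ [_ [_ [_ [H _]]]]]]]]; apply: H. Qed.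

Lemma voa_creation_pos v n : V v -> 0 <= n -> Y v n vac = 0.
Proof. by case: hV => _ [_ [_ [_ [_ [_ [_ [_ [_ [H _]]]]]]]]]; apply: H. Qed.

Lemma voa_jacobi (u v w : W) (l m n : int) (M : nat) : V u -> V v -> V w ->
  (forall k : nat, (M <= k)%N ->
     [/\ Y u (l + k%:Z) v = 0, Y v (n + k%:Z) w = 0 & Y u (m + k%:Z) w = 0]) ->
  \sum_(i < M) binz K m i *: Y (Y u (l + i%:Z) v) (m + n - i%:Z) w =
  \sum_(i < M) ((-1) ^+ i * binz K l i) *:
     (Y u (l + m - i%:Z) (Y v (n + i%:Z) w)
      - (-1) ^+ `|l|%N *: Y v (l + n - i%:Z) (Y u (m + i%:Z) w)).
Proof. by case: hV => _ [_ [_ [_ [_ [_ [_ [_ [_ [_ [H _]]]]]]]]]]; apply: H. Qed.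

Lemma voa_virasoro : exists c : K, forall (m n : int) v, V v ->
  Y om (m + 1) (Y om (n + 1) v) - Y om (n + 1) (Y om (m + 1) v) =
  (m - n)%:~R *: Y om (m + n + 1) v
  + (((m ^+ 3 - m)%:~R / 12%:R) * (if m + n == 0 then c else 0)) *: v.
Proof. by case: hV => _ [_ [_ [_ [_ [_ [_ [_ [_ [_ [_ [H _]]]]]]]]]]]. Qed.

Lemma voa_derivative u w n : V u -> V w ->
  Y (Y om 0 u) n w = - (n%:~R *: Y u (n - 1) w).
Proof. by case: hV => _ [_ [_ [_ [_ [_ [_ [_ [_ [_ [_ [_ [H _]]]]]]]]]]]]; apply: H. Qed.

Lemma voa_grading v : V v -> exists (s : seq int) (f : int -> W),
  (forall n, V (f n) /\ Y om 1 (f n) = n%:~R *: f n) /\ v = \sum_(n <- s) f n.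
Proof. by case: hV => _ [_ [_ [_ [_ [_ [_ [_ [_ [_ [_ [_ [_ [H _]]]]]]]]]]]]]; apply: H. Qed.

Lemma voa_fin_dim (n : int) : exists s : seq W, forall v, V v -> Y om 1 v = n%:~R *: v ->
  exists c : nat -> K, v = \sum_(i < size s) c i *: s`_i.
Proof. by case: hV => _ [_ [_ [_ [_ [_ [_ [_ [_ [_ [_ [_ [_ [_ [H _]]]]]]]]]]]]]]. Qed.

Lemma voa_lower_bound : exists N : int, forall (n : int) v,
  n < N -> V v -> Y om 1 v = n%:~R *: v -> v = 0.
Proof. by case: hV => _ [_ [_ [_ [_ [_ [_ [_ [_ [_ [_ [_ [_ [_ [_ H]]]]]]]]]]]]]]. Qed.

(* Hence L(-1) does not depend on the choice of conformal vector. *)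
Lemma voa_translation v : V v -> Y om 0 v = Y v (-2) vac.
Proof.
move=> Vv; have [_ Vvac VY] := voa_subalgebra.
have := voa_derivative (-1) Vv Vvac.
rewrite voa_creation; last by apply: VY => //; exact: voa_conformal.
by rewrite scaleN1r opprK.
Qed.

End VOAAxioms.

Section AmbientVOA.
Variables (K : fieldType) (W : lmodType K) (Y : vop W) (vac om : W).
Hypothesis charK0 : [pchar K] =i pred0.
Hypothesis hW : is_VOA (@setT_W K W) Y vac om.

Let memW (x : W) : setT_W x := I.
#[local] Hint Resolve memW : core.

Let natf_eq0 : forall n : nat, (n%:R == 0 :> K) = (n == 0)%N := (pcharf0P K).1 charK0.

Lemma Y_linear u n : linear (Y u n).
Proof. by move=> a v v'; apply: (voa_linearr hW). Qed.

Lemma YrD u v v' n : Y u n (v + v') = Y u n v + Y u n v'.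
Proof. by rewrite -[v]scale1r (voa_linearr hW) // !scale1r. Qed.

Lemma YlD u u' v n : Y (u + u') n v = Y u n v + Y u' n v.
Proof. by rewrite -[u]scale1r (voa_linearl hW) // !scale1r. Qed.

Lemma Yr0 u n : Y u n 0 = 0.
Proof. by apply: (addrI (Y u n 0)); rewrite -YrD !addr0. Qed.

Lemma Yl0 v n : Y 0 n v = 0.
Proof. by apply: (addrI (Y 0 n v)); rewrite -YlD !addr0. Qed.

Lemma YrZ a u v n : Y u n (a *: v) = a *: Y u n v.
Proof. by rewrite -[a *: v]addr0 (voa_linearr hW) // Yr0 addr0. Qed.

Lemma YlZ a u v n : Y (a *: u) n v = a *: Y u n v.
Proof. by rewrite -[a *: u]addr0 (voa_linearl hW) // Yl0 addr0. Qed.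

Lemma YlB u u' v n : Y (u - u') n v = Y u n v - Y u' n v.
Proof. by rewrite YlD -scaleN1r YlZ scaleN1r. Qed.

Lemma binz0 m : binz K m 0 = 1.
Proof. by rewrite /binz big_ord0 divr1. Qed.

Lemma binz0S i : binz K 0 i.+1 = 0.
Proof. by rewrite /binz big_ord_recl /= subrr mul0r mul0r. Qed.

(* The Jacobi identity with l = 0: only its i = 0 term survives on the right. *)
Lemma commutator_formula u v w m n (M : nat) :
  (forall i : nat, (M <= i)%N -> Y u i%:Z v = 0) ->
  \sum_(i < M) binz K m i *: Y (Y u i%:Z v) (m + n - i%:Z) w
    = Y u m (Y v n w) - Y v n (Y u m w).
Proof.
move=> uv0; have [N1 vw0] := voa_truncation hW (u := v) (v := w) I I.
have [N2 uw0] := voa_truncation hW (u := u) (v := w) I I.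
pose M' := (M + `|N1 - n|%N + `|N2 - m|%N).+1.
have trunc k : (M' <= k)%N ->
    [/\ Y u (0 + k%:Z) v = 0, Y v (n + k%:Z) w = 0 & Y u (m + k%:Z) w = 0].
  by move=> Mk; split; [rewrite add0r; apply: uv0 | apply: vw0 | apply: uw0]; lia.
have := @voa_jacobi _ _ _ _ _ _ hW u v w 0 m n M' I I I trunc.
rewrite [X in _ = X]big_ord_recl [X in _ = _ + X]big1 => [|i _]; last first.
  by rewrite binz0S mulr0 scale0r.
rewrite /= expr0 binz0 mulr1 !scale1r !add0r !addr0.
under eq_bigr do rewrite add0r.
move=> <-; rewrite (big_ord_widen M'
  (fun i => binz K m i *: Y (Y u i%:Z v) (m + n - i%:Z) w)); last by lia.
rewrite big_mkcond; apply: eq_bigr => i _.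
by case: ifP => // /negbT; rewrite -leqNgt => /uv0 ->; rewrite Yl0 scaler0.
Qed.

Definition annihilator (w u : W) : Prop := forall n : int, 0 <= n -> Y u n w = 0.

(* The Jacobi identity with w = 1, m = -1, n = 0, M = 1 reads
   0 = u_(l-1) v - (-1)^l v_l u, by the creation property. *)
Lemma annihilator_sym u v : annihilator v u -> annihilator u v.
Proof.
move=> uv0 l l_ge0.
have trunc k : (1 <= k)%N ->
    [/\ Y u (l + k%:Z) v = 0, Y v (0 + k%:Z) vac = 0 & Y u (-1 + k%:Z) vac = 0].
  by move=> k_ge1; split;
    [apply: uv0 | apply: (voa_creation_pos hW) | apply: (voa_creation_pos hW)] => //; lia.
have := @voa_jacobi _ _ _ _ _ _ hW u v vac l (-1) 0 1 I I I trunc.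
rewrite !big_ord1 /= !addr0 uv0 // Yl0 scaler0 (voa_creation_pos hW) // Yr0.
rewrite (voa_creation hW) // add0r => /esym/eqP.
rewrite scaler_eq0 oppr_eq0 scaler_eq0 signr_eq0 expr0 mul1r binz0 oner_eq0 /=.
by move/eqP.
Qed.

(* The Jacobi identity with m = 0 expands (u_l u')_n w in terms of
   u_(l-i) u'_(n+i) w and u'_(l+n-i) u_i w, which all vanish. *)
Lemma annihilator_subalgebra w : vertex_subalgebra Y vac (annihilator w).
Proof.
split.
- split=> [n _|a x y x0 y0 n n_ge0]; first by rewrite Yl0.
  by rewrite YlD YlZ x0 // y0 // scaler0 addr0.
- by move=> n n_ge0; rewrite (voa_vacuum hW) //; case: eqP => // n_eq; rewrite n_eq in n_ge0.
- move=> u u' l u0 u'0 n n_ge0.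
  have [N uu'0] := voa_truncation hW (u := u) (v := u') I I.
  have trunc k : (`|N - l|%N.+1 <= k)%N ->
      [/\ Y u (l + k%:Z) u' = 0, Y u' (n + k%:Z) w = 0 & Y u (0 + k%:Z) w = 0].
    by move=> Mk; split; [apply: uu'0 | apply: u'0 | apply: u0]; lia.
  have := @voa_jacobi _ _ _ _ _ _ hW u u' w l 0 n _ I I I trunc.
  rewrite big_ord_recl big1 => [|i _]; last by rewrite binz0S scale0r.
  rewrite /= !addr0 add0r binz0 scale1r => ->.
  apply: big1 => i _.
  have -> : Y u' (n + i%:Z) w = 0 by apply: u'0; lia.
  have -> : Y u (0 + i%:Z) w = 0 by apply: u0; lia.
  by rewrite !Yr0 scaler0 subrr scaler0.
Qed.

Lemma commutant_subalgebra U : vertex_subalgebra Y vac (commutant Y U).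
Proof.
split.
- split=> [u n _ _|a x y x0 y0 u n Uu n_ge0]; first by rewrite Yr0.
  by rewrite YrD YrZ x0 // y0 // scaler0 addr0.
- by move=> u n _ n_ge0; rewrite (voa_creation_pos hW).
- move=> a b k a0 b0 u n Uu n_ge0.
  have := @commutator_formula u a b n k 0 (fun i _ => a0 u i Uu (le0z_nat i)).
  by rewrite big_ord0 (b0 u n Uu n_ge0) Yr0 subr0.
Qed.

Lemma commutant_vgen x w : commutant Y (vgen Y vac x) w <-> annihilator w x.
Proof.
split=> [xw0 n n_ge0|xw0 u n gen_u]; first by apply: xw0 => // U _.
exact: (gen_u (annihilator w) (annihilator_subalgebra w) xw0).
Qed.

Lemma sub_bicommutant (U : W -> Prop) v : U v -> commutant Y (commutant Y U) v.
Proof. by move=> Uv u n Cu; apply: annihilator_sym => k k_ge0; apply: Cu. Qed.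

Lemma commutant_anti (U U' : W -> Prop) : (forall x, U x -> U' x) ->
  forall v, commutant Y U' v -> commutant Y U v.
Proof. by move=> sUU' v Cv u n Uu; apply: Cv; apply: sUU'. Qed.

Lemma eq_commutant (U U' : W -> Prop) :
  set_eq U U' -> set_eq (commutant Y U) (commutant Y U').
Proof. by move=> eqU x; split; apply: commutant_anti => y /eqU. Qed.

Lemma commutant3 (U : W -> Prop) :
  set_eq (commutant Y (commutant Y (commutant Y U))) (commutant Y U).
Proof.
by move=> x; split; [apply: commutant_anti; apply: sub_bicommutant | apply: sub_bicommutant].
Qed.

(* By the commutator formula x_0 (v_k w) = (x_0 v)_k w = (L(-1) v)_k w = -k v_(k-1) w,
   so v_(k+1) w = 0 forces v_k w = 0 for k >= 0 (char 0): descend from the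
   truncation bound. *)
Lemma annihilator_translation x v w :
  annihilator w x -> Y x 0 v = Y om 0 v -> annihilator w v.
Proof.
move=> xw0 x0v.
have lower k : Y x 0 (Y v k w) = - (k%:~R *: Y v (k - 1) w).
  have [N xv0] := voa_truncation hW (u := x) (v := v) I I.
  have := @commutator_formula x v w 0 k `|N|%N.+1 (fun i i_ge => xv0 i ltac:(lia)).
  rewrite big_ord_recl big1 => [|i _]; last by rewrite binz0S scale0r.
  rewrite /= binz0 scale1r addr0 (xw0 0 (lexx _)) Yr0 !subr0 add0r => <-.
  by rewrite x0v (voa_derivative hW).
have [N vw0] := voa_truncation hW (u := v) (v := w) I I.
suff down d k : 0 <= k -> N <= k + d%:Z -> Y v k w = 0.
  by move=> n n_ge0; apply: (down `|N - n|%N n n_ge0); lia.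
elim: d k => [|d IH] k k_ge0 Nkd; first by apply: vw0; lia.
have vk1w0 : Y v (k + 1) w = 0 by apply: IH; lia.
have := lower (k + 1); rewrite vk1w0 Yr0 addrK => /esym/eqP.
rewrite oppr_eq0 scaler_eq0 pchar0_intr_eq0 //.
by case: eqP => [|_ /eqP //]; lia.
Qed.

Lemma virasoro_of_products x (c : K) :
  Y x 0 x = Y om 0 x -> Y x 1 x = 2%:R *: x -> Y x 2 x = 0 ->
  Y x 3 x = (c / 2%:R) *: vac -> (forall i : nat, (4 <= i)%N -> Y x i%:Z x = 0) ->
  forall (m n : int) v,
    Y x (m + 1) (Y x (n + 1) v) - Y x (n + 1) (Y x (m + 1) v) =
    (m - n)%:~R *: Y x (m + n + 1) v
    + ((m ^+ 3 - m)%:~R / 12%:R * (if m + n == 0 then c else 0)) *: v.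
Proof.
move=> x0 x1 x2 x3 x_ge4 m n v.
rewrite -(commutator_formula v (m + 1) (n + 1) x_ge4).
rewrite !big_ord_recl big_ord0 /bump /= x0 x1 x2 x3 Yl0 !YlZ (voa_derivative hW) //.
rewrite (voa_vacuum hW) //.
have -> : m + 1 + (n + 1) - 0%:Z - 1 = m + n + 1 by lia.
have -> : m + 1 + (n + 1) - 1%:Z = m + n + 1 by lia.
have -> : (m + 1 + (n + 1) - 3%:Z == -1) = (m + n == 0) by apply/eqP/eqP; lia.
rewrite /binz !big_ord_recl !big_ord0 /bump /= !factS fact0 !scaler0 !addr0 add0r.
rewrite !scalerN !scalerA addrA -scaleNr -scalerDl.
case: (m + n == 0); last first.
  rewrite !scaler0 mulr0 scale0r !addr0; congr (_ *: _).
  by field; rewrite ?oner_neq0 ?natf_eq0.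
by congr (_ *: _ + _ *: _); rewrite /bump /=; field; rewrite ?oner_neq0 ?natf_eq0.
Qed.

(* All axioms but the Virasoro relations are inherited from W; D is graded
   because it is stable under x_1 = L(0). *)
Lemma is_VOA_subalgebra (D : W -> Prop) x :
  vertex_subalgebra Y vac D -> D x ->
  (exists c : K, forall (m n : int) v, D v ->
     Y x (m + 1) (Y x (n + 1) v) - Y x (n + 1) (Y x (m + 1) v) =
     (m - n)%:~R *: Y x (m + n + 1) v
     + ((m ^+ 3 - m)%:~R / 12%:R * (if m + n == 0 then c else 0)) *: v) ->
  (forall v, D v -> Y x 0 v = Y om 0 v) ->
  (forall v, D v -> Y x 1 v = Y om 1 v) ->
  is_VOA D Y vac x.
Proof.
move=> [subD Dvac DY] Dx vir x0 x1.
have DL0 v : D v -> D (Y om 1 v) by move=> Dv; rewrite -x1 //; apply: DY.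
split; first exact: subD. split; first exact: Dvac. split; first exact: Dx.
split; first exact: DY.
split; first by move=> *; apply: (voa_linearl hW).
split; first by move=> *; apply: (voa_linearr hW).
split; first by move=> u v _ _; apply: (voa_truncation hW).
split; first by move=> v n _; apply: (voa_vacuum hW).
split; first by move=> v _; apply: (voa_creation hW).
split; first by move=> v n _; apply: (voa_creation_pos hW).
split; first by move=> u v w l m n M _ _ _; apply: (voa_jacobi hW).
split; first exact: vir.
split; first by move=> u w n Du _ /=; rewrite x0 // (voa_derivative hW).
split.
  move=> v Dv /=; have [s [g [Wg ev]]] := voa_grading hW (I : setT_W v).
  have [|s' [f [Df ->]]] := eigen_decomposition charK0 (Y_linear om 1) subD DL0 Dv.
    by exists s, g; split=> // n; case: (Wg n).
  by exists s', f; split=> // n; have [Dfn L0f] := Df n; rewrite x1.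
split=> [n|] /=.
  have [s Ws] := voa_fin_dim hW n; exists s => v Dv; rewrite x1 //; exact: Ws.
have [N WN] := voa_lower_bound hW; exists N => n v n_lt Dv; rewrite x1 //; exact: WN.
Qed.

Section SemiConformal.
Variables (V : W -> Prop) (omV : W).
Hypothesis hV : is_VOA V Y vac omV.

Lemma conformal_mode0 v : V v -> Y omV 0 v = Y om 0 v.
Proof. by move=> Vv; rewrite (voa_translation hV) // (voa_translation hW). Qed.

Lemma commutant_vgen_conformal :
  set_eq (commutant Y (vgen Y vac omV)) (commutant Y V).
Proof.
move=> w; split=> [/commutant_vgen omVw0 u n Vu|].
  exact: (annihilator_translation omVw0 (conformal_mode0 Vu)).
apply: commutant_anti => x; apply; [exact: voa_subalgebra hV | exact: voa_conformal hV].
Qed.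

(* The products omV_i omV are read off the Virasoro relation
   [L(p), L(-2)] 1 = (p + 2) L(p - 2) 1 + (p^3 - p)/12 delta_(p,2) c 1 of V;
   the commutator formula of W then gives the Virasoro relations on all of W. *)
Lemma conformal_virasoro : exists c : K, forall (m n : int) v,
  Y omV (m + 1) (Y omV (n + 1) v) - Y omV (n + 1) (Y omV (m + 1) v) =
  (m - n)%:~R *: Y omV (m + n + 1) v
  + ((m ^+ 3 - m)%:~R / 12%:R * (if m + n == 0 then c else 0)) *: v.
Proof.
have [c vir] := voa_virasoro hV; exists c.
have [_ Vvac _] := voa_subalgebra hV; have Vom := voa_conformal hV.
have products (p : int) : 0 <= p -> Y omV (p + 1) omV =
    (p + 2)%:~R *: Y omV (p - 1) vac
    + ((p ^+ 3 - p)%:~R / 12%:R * (if p == 2 then c else 0)) *: vac.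
  move=> p_ge0; have := vir p (-2) vac Vvac.
  rewrite (voa_creation_pos hV (n := p + 1)) //; last by lia.
  rewrite Yr0 subr0 (voa_creation hV) // opprK.
  have -> : p + -2 + 1 = p - 1 by lia.
  by have -> : (p + -2 == 0) = (p == 2) by apply/eqP/eqP; lia.
apply: virasoro_of_products.
- exact: conformal_mode0.
- by rewrite (products 0) // (voa_creation hV) // mulr0 scale0r addr0.
- by rewrite (products 1) // (voa_creation_pos hV) // mulr0 scale0r scaler0 addr0.
- apply: etrans (products 2 isT) _.
  rewrite (voa_creation_pos hV) // scaler0 add0r eqxx.
  by congr (_ *: _); field; rewrite !natf_eq0.
- move=> i i_ge4; rewrite -[i%:Z](subrK 1) products; last by lia.
  rewrite (voa_creation_pos hV) //; last by lia.
  have -> : (i%:Z - 1 == 2) = false by apply/eqP; lia.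
  by rewrite scaler0 add0r mulr0 scale0r.
Qed.

End SemiConformal.

Lemma Sc_bicommutant_closed omV : Sc Y vac om omV ->
  ScClosed Y vac om (commutant Y (commutant Y (vgen Y vac omV))) omV.
Proof.
move=> [V [hV Lsc]].
have diff_C : commutant Y (vgen Y vac omV) (om - omV).
  apply/(commutant_vgen_conformal hV _).2 => v n Vv.
  apply: annihilator_sym => k k_ge0; rewrite YlB.
  have [->|k_gt0] : k = 0 \/ 0 < k by lia.
    by rewrite (conformal_mode0 hV Vv) subrr.
  by rewrite -[k](subrK 1) Lsc ?subrr //; lia.
have modes d n : commutant Y (commutant Y (vgen Y vac omV)) d -> 0 <= n ->
    Y om n d = Y omV n d.
  by move=> Dd n_ge0; apply/eqP; rewrite -subr_eq0 -YlB; apply/eqP; exact: Dd.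
split; last exact: commutant3.
split; last by move=> n v n_ge0 Dv; apply: modes => //; lia.
apply: is_VOA_subalgebra; first exact: commutant_subalgebra.
- by apply: sub_bicommutant => U _.
- by have [c vir] := conformal_virasoro hV; exists c => m n v _; apply: vir.
- by move=> v Dv; rewrite modes.
- by move=> v Dv; rewrite modes.
Qed.

Lemma ScClosed_bicommutant_vgen V omV : ScClosed Y vac om V omV ->
  set_eq V (commutant Y (commutant Y (vgen Y vac omV))).
Proof.
move=> [[hV _] V_closed] x.
have CC_eq := eq_commutant (commutant_vgen_conformal hV) x.
by split=> [/(V_closed x).2/CC_eq.2|/CC_eq.1/(V_closed x).1].
Qed.

End AmbientVOA.

Theorem proposition2p1 (K : fieldType) (W : lmodType K) (Y : vop W)
    (vac om : W) (charK0 : [pchar K] =i pred0)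
    (hW : is_VOA (@setT_W K W) Y vac om) :
  (forall V omV, ScAlg Y vac om V omV -> Sc Y vac om omV) /\
  (forall omV, Sc Y vac om omV ->
     ScClosed Y vac om (commutant Y (commutant Y (vgen Y vac omV))) omV) /\
  (forall V omV, ScClosed Y vac om V omV ->
     set_eq V (commutant Y (commutant Y (vgen Y vac omV)))).
Proof.
split; first by move=> V omV scV; exists V.
split; first exact: Sc_bicommutant_closed charK0 hW.
exact: ScClosed_bicommutant_vgen charK0 hW.
Qed.
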